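(* Let $A$ be a deterministic max-finding algorithm that makes $O(n)$ comparisons on $n$ elements. Then $A$ has error at least $\log_2\log_2 n - O(1)$.
   Context: Model of imprecise comparisons: there are $n$ elements, each with a fixed unknown real value; we identify an element with its value. Asked to compare $x_i$ and $x_j$, the comparator answers either ''$x_i \ge x_j$'' or ''$x_j \ge x_i$''. If $|x_i-x_j|>1$ the answer is correct; if $|x_i-x_j|\le 1$ the answer is arbitrary (possibly adversarial and adaptive). The error of a max-finding algorithm (on inputs of size $n$) is the smallest $k$ such that for every input and every consistent comparator behaviour its output $x$ satisfies $x \ge x^*-k$, where $x^*$ is the maximum value of an input element. *)

From mathcomp Require Import ssreflect ssrbool ssrnat fintype.
From Stdlib Require Import Reals.

Set Implicit Arguments.
Unset Strict Implicit.

(* A deterministic comparison-based algorithm on n elements, as a decision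
   tree.  [Ask i j t_ge t_le] compares x_i and x_j: the comparator answers
   either "x_i >= x_j" (continue with t_ge) or "x_j >= x_i" (continue with
   t_le).  [Out i] outputs element i. *)
Inductive dtree (n : nat) : Type :=
| Out : 'I_n -> dtree n
| Ask : 'I_n -> 'I_n -> dtree n -> dtree n -> dtree n.

Fixpoint depth (n : nat) (t : dtree n) : nat :=
  match t with
  | Out _ => 0
  | Ask _ _ l r => S (Nat.max (depth l) (depth r))
  end.

(* [reach x t o]: on input values x, some comparator behaviour consistent
   with the imprecise-comparison model (answers are correct whenever
   |x_i - x_j| > 1, arbitrary -- adaptively/adversarially -- otherwise)
   makes the algorithm t output o.  The answer "x_i >= x_j" is permitted
   iff it is not a wrong answer with |x_i - x_j| > 1, i.e. iff
   x_i >= x_j - 1. *)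
Inductive reach (n : nat) (x : 'I_n -> R) : dtree n -> 'I_n -> Prop :=
| reach_out : forall o, reach x (Out o) o
| reach_ge : forall i j l r o, (x j - 1 <= x i)%R -> reach x l o ->
    reach x (Ask i j l r) o
| reach_le : forall i j l r o, (x i - 1 <= x j)%R -> reach x r o ->
    reach x (Ask i j l r) o.

(* k is an admissible error bound for t: for every input and every consistent
   comparator behaviour, the output x satisfies x >= x^* - k, where x^* is the
   maximum (equivalently x >= x_i - k for every element i). *)
Definition error_bound (n : nat) (t : dtree n) (k : R) : Prop :=
  forall (x : 'I_n -> R) (o : 'I_n), reach x t o ->
    forall i : 'I_n, (x i - k <= x o)%R.

(* "error of t is at least e": the smallest admissible k is >= e, i.e. every
   admissible k is >= e. *)
Definition error_at_least (n : nat) (t : dtree n) (e : R) : Prop :=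
  forall k : R, error_bound t k -> (e <= k)%R.

Definition log2 (y : R) : R := (ln y / ln 2)%R.

(* Let the adversary answer every comparison in favour of the element that
   has won fewer comparisons so far, and record each duel with the rank of
   its winner, i.e. the number of duels the winner had won before.  Around
   the output o grow the balls B_0 = {o}, B_(k+1) = B_k + everyone who lost a
   duel to a member of B_k.  Valuing each element by its distance to o,
   truncated at k+1, makes all answers admissible, so the error is at least
   k+1 as long as B_k misses an element.
   Conversely, the loser of a duel of rank r has itself won at least r duels,
   and an element wins at most h duels of rank < h.  Hence B_(k+1) consists of
   o, at most h |B_k| losers of duels of rank < h, and the at most Kn/h
   elements with h wins (Kn bounds the number of comparisons).  Choosing h
   about |B_(k+1)| / 3|B_k| gives |B_(k+1)|^2 <= 36 Kn |B_k|, so B_k can only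
   exhaust all n elements once n <= (36 K)^(2^k), i.e. k >= log log n - O(1). *)

From mathcomp Require Import ssreflect ssrbool ssrnat fintype.
From Stdlib Require Import Reals.
From mathcomp Require Import ssrnat ssrfun eqtype seq div finset bigop.
From Stdlib Require Import Lra.
From mathcomp Require Import zify.

Set Implicit Arguments.
Unset Strict Implicit.
Unset Printing Implicit Defensive.

Section Adversary.

Variable n : nat.

(* (winner, loser, rank), the rank being the number of duels the winner had
   already won *)
Definition duel := ('I_n * 'I_n * nat)%type.
Definition winner (d : duel) : 'I_n := d.1.1.
Definition loser (d : duel) : 'I_n := d.1.2.
Definition rank (d : duel) : nat := d.2.

Definition wins (E : seq duel) (v : 'I_n) : nat := count (fun d => winner d == v) E.

Definition bump (w : 'I_n -> nat) (a : 'I_n) (v : 'I_n) : nat := w v + (v == a).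

Fixpoint adversary (t : dtree n) (w : 'I_n -> nat) : 'I_n * seq duel :=
  match t with
  | Out o => (o, [::])
  | Ask i j l r =>
    if w i <= w j then let p := adversary l (bump w i) in (p.1, (i, j, w i) :: p.2)
    else let p := adversary r (bump w j) in (p.1, (j, i, w j) :: p.2)
  end.

Lemma reach_adversary (t : dtree n) (w : 'I_n -> nat) (x : 'I_n -> R) :
  (forall d, d \in (adversary t w).2 -> (x (loser d) - 1 <= x (winner d))%R) ->
  reach x t (adversary t w).1.
Proof.
elim: t w => [o|i j l IHl r IHr] w /=; first by constructor.
case: ifP => _ /= consistent.
- apply: reach_ge; first by apply: (consistent (i, j, w i)); rewrite inE eqxx.
  by apply: IHl => d dE; apply: consistent; rewrite inE dE orbT.
- apply: reach_le; first by apply: (consistent (j, i, w j)); rewrite inE eqxx.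
  by apply: IHr => d dE; apply: consistent; rewrite inE dE orbT.
Qed.

Lemma size_adversary (t : dtree n) (w : 'I_n -> nat) :
  size (adversary t w).2 <= depth t.
Proof.
elim: t w => [o|i j l IHl r IHr] w //=.
case: ifP => _ /=; rewrite ltnS.
- by apply: leq_trans (IHl _) _; apply/leP; apply: Nat.le_max_l.
- by apply: leq_trans (IHr _) _; apply/leP; apply: Nat.le_max_r.
Qed.

Lemma adversary_ind (P : ('I_n -> nat) -> seq duel -> Prop) :
  (forall w, P w [::]) ->
  (forall w a b E, w a <= w b -> P (bump w a) E -> P w ((a, b, w a) :: E)) ->
  forall t w, P w (adversary t w).2.
Proof.
move=> Pnil Pcons; elim=> [o|i j l IHl r IHr] w //=.
case: leqP => [le_ij|lt_ji]; apply: Pcons => //; exact: ltnW.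
Qed.

Lemma adversary_rank_le_wins (t : dtree n) (w : 'I_n -> nat) :
  let E := (adversary t w).2 in
  {in E, forall d, rank d <= w (loser d) + wins E (loser d)}.
Proof.
move: t w; apply: (adversary_ind (P := fun w E =>
  {in E, forall d, rank d <= w (loser d) + wins E (loser d)})) => // w a b E le_ab IH d.
have wins_cons v : w v + wins ((a, b, w a) :: E) v = bump w a v + wins E v.
  by rewrite /wins /bump /winner /= [v == a]eq_sym addnA.
rewrite inE wins_cons => /predU1P [->|/IH //].
by rewrite /rank /loser /=; apply: leq_trans le_ab _; rewrite /bump -addnA leq_addr.
Qed.

Lemma sum_wins (B : {set 'I_n}) (s : seq duel) :
  \sum_(a in B) wins s a = count (fun d => winner d \in B) s.
Proof.
elim: s => [|d s IH] /=; first by rewrite big1.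
rewrite big_split /= IH; congr (_ + _).
have [dB|dNB] := boolP (winner d \in B).
- rewrite (bigD1 (winner d)) //= eqxx big1 // => a /andP [_ ne_ad].
  by rewrite eq_sym (negbTE ne_ad).
- rewrite big1 // => a aB; case: (winner d =P a) => // winner_d.
  by move: dNB; rewrite winner_d aB.
Qed.

Lemma adversary_wins_low_ranks (t : dtree n) (w : 'I_n -> nat) (h : nat) (a : 'I_n) :
  wins [seq d <- (adversary t w).2 | rank d < h] a <= h - w a.
Proof.
move: t w a; apply: (adversary_ind (P := fun w E => forall a,
  wins [seq d <- E | rank d < h] a <= h - w a)) => [w a|w a b E _ IH v] /=.
  exact: leq0n.
have := IH v; rewrite /bump /rank /=.
case: (a =P v) => [<-|/eqP ne_av]; rewrite /wins; case: ltnP => /= rank_h.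
- by rewrite /winner /= eqxx; lia.
- by rewrite eqxx; lia.
- by rewrite /winner /= (negbTE ne_av) eq_sym (negbTE ne_av) addn0.
- by rewrite eq_sym (negbTE ne_av) addn0.
Qed.

End Adversary.

Section Balls.

Variables (n : nat) (o : 'I_n) (E : seq (duel n)).

Definition beaten (B : {set 'I_n}) : {set 'I_n} :=
  [set v | has (fun d => (winner d \in B) && (loser d == v)) E].

Fixpoint ball (k : nat) : {set 'I_n} :=
  if k is k'.+1 then ball k' :|: beaten (ball k') else [set o].

Lemma ballS k : ball k.+1 = ball k :|: beaten (ball k).
Proof. by []. Qed.

Lemma ball_mono k k' : k <= k' -> ball k \subset ball k'.
Proof.
move/subnKC <-; elim: (k' - k) => [|m IH]; first by rewrite addn0.
by rewrite addnS ballS; apply: subset_trans IH (subsetUl _ _).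
Qed.

Lemma center_in_ball k : o \in ball k.
Proof. by apply: (subsetP (ball_mono (leq0n k))); rewrite set11. Qed.

Lemma loser_in_ballS k d :
  d \in E -> winner d \in ball k -> loser d \in ball k.+1.
Proof.
move=> dE winner_d; rewrite ballS !inE; apply/orP; right.
by apply/hasP; exists d; rewrite // winner_d eqxx.
Qed.

Lemma ballSP k v : v \in ball k.+1 ->
  v = o \/ exists2 d, d \in E & loser d = v /\ winner d \in ball k.
Proof.
have beatenP B : v \in beaten B -> exists2 d, d \in E & loser d = v /\ winner d \in B.
  by rewrite inE => /hasP [d dE /andP [winner_d /eqP loser_d]]; exists d.
elim: k => [|k IH]; rewrite ballS inE => /orP [|/beatenP]; try by right.
- by rewrite inE => /eqP; left.
- case/IH => [|[d dE [loser_d winner_d]]]; first by left.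
  by right; exists d; rewrite // ballS inE winner_d.
Qed.

Definition level (k : nat) (v : 'I_n) : nat := \sum_(0 <= j < k) (v \notin ball j).

Lemma level_center k : level k o = 0.
Proof. by rewrite /level big1 // => j _; rewrite center_in_ball. Qed.

Lemma level_outside k v : v \notin ball k -> level k.+1 v = k.+1.
Proof.
move=> vNk; rewrite /level (eq_big_nat _ _ (F2 := fun=> 1)).
  by rewrite sum_nat_const_nat muln1.
move=> j /andP [_ le_jk]; apply/eqP; rewrite eqb1.
by apply: contra vNk; apply/subsetP/ball_mono.
Qed.

Lemma level_loser k d : d \in E -> level k (loser d) <= (level k (winner d)).+1.
Proof.
move=> dE; case: k => [|k]; first by rewrite /level big_geq.
rewrite /level big_nat_recl // big_nat_recr // addnC -[X in _ <= X]addn1.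
rewrite leq_add ?leq_b1 //; apply: leq_trans (leq_addr _ _); apply: leq_sum => j _.
case: (boolP (winner d \in ball j)) => [/(loser_in_ballS dE) -> //| _].
exact: leq_b1.
Qed.

Definition heavy (h : nat) : {set 'I_n} := [set v | h <= wins E v].

Lemma heavy_card h : h * #|heavy h| <= size E.
Proof.
rewrite mulnC -sum_nat_const.
apply: leq_trans (count_size (fun d => winner d \in heavy h) E).
by rewrite -sum_wins; apply: leq_sum => v; rewrite inE.
Qed.

Hypothesis rank_le_wins : {in E, forall d, rank d <= wins E (loser d)}.
Hypothesis wins_low_ranks : forall h a, wins [seq d <- E | rank d < h] a <= h.

Lemma card_ballS k h : #|ball k.+1| <= 1 + h * #|ball k| + #|heavy h|.
Proof.
pose L := [seq loser d | d <- [seq d <- E | rank d < h] & winner d \in ball k].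
have sub : ball k.+1 \subset [set o] :|: [set v in L] :|: heavy h.
  apply/subsetP => v /ballSP [->|[d dE [<- winner_d]]]; first by rewrite !inE eqxx.
  rewrite !inE; case: leqP => [_|light]; first by rewrite orbT.
  apply/orP; left; apply/orP; right; apply: map_f.
  by rewrite mem_filter winner_d mem_filter dE (leq_ltn_trans (rank_le_wins dE)).
apply: leq_trans (subset_leq_card sub) _; apply: leq_trans (leq_card_setU _ _).1 _.
rewrite leq_add2r; apply: leq_trans (leq_card_setU _ _).1 _.
rewrite cards1 cardsE leq_add2l; apply: leq_trans (card_size _) _.
rewrite size_map size_filter -sum_wins mulnC -sum_nat_const.
by apply: leq_sum => a _; apply: wins_low_ranks.
Qed.

End Balls.

Lemma sq_le_of_tradeoff (s s' Q : nat) (H : nat -> nat) :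
  0 < s -> s' <= Q ->
  (forall h, s' <= 1 + h * s + H h) -> (forall h, h * H h <= Q) ->
  s' ^ 2 <= 36 * Q * s.
Proof.
move=> s_gt0 s'_le_Q cover heavy_le; rewrite leqNgt expnS expn1; apply/negP => big_s'.
have s'_gt : 36 * s < s'.
  rewrite ltnNge; apply/negP => le_s'; move: big_s'; rewrite ltnNge; apply/negP/negPn.
  by rewrite mulnAC mulnC leq_mul.
pose h := s' %/ (3 * s).
have h_le : h * (3 * s) <= s' by apply: leq_divM.
have h_gt : s' < h.+1 * (3 * s) by apply: ltn_ceil; lia.
have h_ge1 : 1 <= h by nia.
have cover_h := cover h; have heavy_h := heavy_le h.
have H_large : 2 * s' <= 3 * H h + 3 by lia.
have h_large : s' < 6 * s * h by lia.
have : 2 * s' * s' <= 18 * s * (h * H h) + 18 * s * h by nia.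
nia.
Qed.

Lemma pow_le_of_sq_le (s : nat -> nat) (Q : nat) :
  s 0 <= 1 -> (forall k, s k.+1 ^ 2 <= Q * s k) ->
  forall k, s k ^ (2 ^ k) <= Q ^ (2 ^ k).-1.
Proof.
move=> s0 sS; elim => [|k IH]; first by rewrite expn0 expn1 expn0.
have -> : (2 ^ k.+1).-1 = 2 ^ k + (2 ^ k).-1.
  by rewrite expnS mul2n -addnn -subn1 -subn1 addnBA // expn_gt0.
rewrite expnD expnS expnM.
apply: leq_trans (_ : (Q * s k) ^ (2 ^ k) <= _); first by rewrite leq_exp2r ?expn_gt0.
by rewrite expnMn leq_mul2l IH orbT.
Qed.

Lemma le_pow_of_pow_le (m a e : nat) :
  0 < m -> 0 < e -> m ^ e <= (a * m) ^ e.-1 -> m <= a ^ e.-1.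
Proof.
move=> m_gt0 e_gt0; rewrite -{1}(prednK e_gt0) expnS expnMn leq_pmul2r //.
by rewrite expn_gt0 m_gt0.
Qed.

Lemma error_bound_ge0 (n : nat) (t : dtree n) (k : R) : error_bound t k -> (0 <= k)%R.
Proof.
move=> bound_k.
have run : reach (fun=> 0%R) t (adversary t (fun=> 0)).1.
  by apply: reach_adversary => d _; lra.
by have := bound_k _ _ run (adversary t (fun=> 0)).1; lra.
Qed.

Section LowerBound.

Variables (n : nat) (t : dtree n).

Let o := (adversary t (fun=> 0)).1.
Let E := (adversary t (fun=> 0)).2.

Lemma error_bound_ge_of_card_ball k kr :
  #|ball o E k| < n -> error_bound t kr -> (INR k.+1 <= kr)%R.
Proof.
move=> ball_small bound_kr.
have [v vNball] : exists v, v \notin ball o E k.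
  apply/existsP; rewrite -negb_forall; apply: contraL ball_small => /forallP full.
  rewrite -leqNgt -{1}(card_ord n) subset_leq_card //.
  by apply/subsetP => v _; apply: full.
pose x v := INR (level o E k.+1 v).
have run : reach x t o.
  apply: reach_adversary => d; rewrite -/E => dE.
  by have := level_loser o k.+1 dE => /leP /le_INR; rewrite S_INR /x; lra.
have := bound_kr x o run v; rewrite /x level_center (level_outside vNball).
by change (INR 0) with 0%R; lra.
Qed.

Lemma card_full_ball K k : 0 < K -> depth t <= K * n -> #|ball o E k| = n ->
  n <= (36 * K) ^ (2 ^ k).-1.
Proof.
move=> K_gt0 depth_t full.
have ball_gt0 j : 0 < #|ball o E j|.
  by rewrite card_gt0; apply/set0Pn; exists o; apply: center_in_ball.
have n_gt0 : 0 < n by rewrite -full ball_gt0.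
have rank_le : {in E, forall d, rank d <= wins E (loser d)}.
  by move=> d; apply: adversary_rank_le_wins.
have low_ranks h a : wins [seq d <- E | rank d < h] a <= h.
  exact: leq_trans (adversary_wins_low_ranks _ _ h a) (leq_subr _ _).
have growth j : #|ball o E j.+1| ^ 2 <= 36 * (K * n) * #|ball o E j|.
  apply: (sq_le_of_tradeoff (H := fun h => #|heavy E h|)).
  - exact: ball_gt0.
  - by apply: leq_trans (max_card _) _; rewrite card_ord leq_pmull.
  - exact: card_ballS.
  - move=> h; apply: leq_trans (heavy_card E h) _.
    exact: leq_trans (size_adversary _ _) depth_t.
have := pow_le_of_sq_le (s := fun j => #|ball o E j|) (eq_leq (cards1 o)) growth k.
by rewrite /= full mulnA; apply: le_pow_of_pow_le; rewrite ?expn_gt0.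
Qed.

Lemma error_bound_ge K k kr : 0 < K -> depth t <= K * n -> (36 * K) ^ (2 ^ k) <= n ->
  error_bound t kr -> (INR k.+1 <= kr)%R.
Proof.
move=> K_gt0 depth_t n_large; apply: error_bound_ge_of_card_ball.
rewrite ltn_neqAle -[X in _ <= X](card_ord n) max_card andbT.
apply/eqP => /(card_full_ball K_gt0 depth_t); apply/negP; rewrite -ltnNge.
by apply: leq_trans n_large; rewrite ltn_exp2l ?ltn_predL ?expn_gt0 //; lia.
Qed.

End LowerBound.

Lemma INR_expn (a e : nat) : INR (a ^ e) = (INR a ^ e)%R.
Proof. by elim: e => [|e IH] //; rewrite expnS mult_INR IH. Qed.

Lemma INR_pow2 (k : nat) : INR (2 ^ k) = (2 ^ k)%R.
Proof. by rewrite INR_expn. Qed.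

Lemma ln2_gt0 : (0 < ln 2)%R.
Proof. by rewrite -ln_1; apply: ln_increasing; lra. Qed.

Lemma log2_lt (x y : R) : (0 < x)%R -> (x < y)%R -> (log2 x < log2 y)%R.
Proof.
move=> x_gt0 lt_xy; apply: Rmult_lt_compat_r; last exact: ln_increasing.
exact: Rinv_0_lt_compat ln2_gt0.
Qed.

Lemma log2_gt0 (x : R) : (1 < x)%R -> (0 < log2 x)%R.
Proof. by move=> x_gt1; rewrite -(Rdiv_0_l (ln 2)) -ln_1; apply: log2_lt; lra. Qed.

Lemma log2_mul (x y : R) : (0 < x)%R -> (0 < y)%R -> log2 (x * y) = (log2 x + log2 y)%R.
Proof.
by move=> x_gt0 y_gt0; rewrite /log2 ln_mult //; field; have := ln2_gt0; lra.
Qed.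

Lemma log2_pow (x : R) (m : nat) : (0 < x)%R -> log2 (x ^ m) = (INR m * log2 x)%R.
Proof. by move=> x_gt0; rewrite /log2 ln_pow //; field; have := ln2_gt0; lra. Qed.

Lemma log2_pow2 (m : nat) : log2 (2 ^ m) = INR m.
Proof. by rewrite log2_pow; last lra; rewrite /log2; field; have := ln2_gt0; lra. Qed.

Lemma log2_log2_lt (x a : R) (k : nat) :
  (1 < x)%R -> (1 < a)%R -> (x < a ^ (2 ^ k))%R ->
  (log2 (log2 x) < INR k + log2 (log2 a))%R.
Proof.
move=> x_gt1 a_gt1 x_lt; have := log2_gt0 a_gt1 => log2a_gt0.
have pow2_gt0 : (0 < 2 ^ k)%R by apply: pow_lt; lra.
rewrite -log2_pow2 -log2_mul //; apply: log2_lt; first exact: log2_gt0.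
have := log2_lt (Rlt_trans _ _ _ Rlt_0_1 x_gt1) x_lt.
by rewrite log2_pow ?INR_pow2; last lra.
Qed.

Lemma le_of_nat_lt_steps (e r : R) :
  (0 <= r)%R -> (forall k : nat, (INR k < e)%R -> (INR k.+1 <= r)%R) -> (e <= r)%R.
Proof.
move=> r_ge0 step; apply: Rnot_lt_le => r_lt_e.
have le_r k : (INR k <= r)%R by elim: k => [//|k IH]; apply: step; lra.
by have [k] := INR_unbounded r; have := le_r k; lra.
Qed.

Theorem mainTheorem18 (A : forall n : nat, dtree n.+1) (c : R) (n0 : nat) :
  (forall n : nat, (n0 <= n)%N -> (INR (depth (A n)) <= c * INR n.+1)%R) ->
  exists (C : R) (N : nat), forall n : nat, (N <= n)%N ->
    error_at_least (A n) (log2 (log2 (INR n.+1)) - C)%R.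
Proof.
move=> depth_A; have [K c_lt_K] := INR_unbounded c.
exists (log2 (log2 (INR (36 * K.+1)))), (maxn n0 1).
move=> n; rewrite geq_max => /andP [n0_le n_gt0].
move=> kr bound_kr; apply: le_of_nat_lt_steps (error_bound_ge0 bound_kr) _ => k k_lt.
apply: (error_bound_ge (K := K.+1)) bound_kr => //.
  apply/leP/INR_le; rewrite mult_INR; apply: Rle_trans (depth_A n n0_le) _.
  by apply: Rmult_le_compat_r; [apply: pos_INR | rewrite S_INR; lra].
rewrite leqNgt; apply/negP => /ltP /lt_INR; rewrite INR_expn => n_lt.
have INR_gt1 m : (1 < m)%N -> (1 < INR m)%R by move=> /ltP /lt_INR.
have K36_gt1 : (1 < 36 * K.+1)%N by rewrite mulnS.
have := log2_log2_lt (INR_gt1 n.+1 n_gt0) (INR_gt1 _ K36_gt1) n_lt; lra.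
Qed.
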